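(* For every $n\ge 1$, the Jonquières group $\mathcal{B}_n$ is solvable of derived length $n+1$.
   Context: $\mathcal{B}_n=\{f=(f_1,\dots,f_n)\in\mathrm{Aut}(\mathbb{A}^n_{\mathbb{C}}): f_i=a_ix_i+p_i,\ a_i\in\mathbb{C}^*,\ p_i\in\mathbb{C}[x_{i+1},\dots,x_n]\}$. For a group $G$, $D^0(G)=G$, $D^{k}(G)$ is the subgroup generated by commutators of $D^{k-1}(G)$; the derived length is the least $k$ with $D^k(G)=\{1\}$. *)

From mathcomp Require Import all_boot all_algebra.
From mathcomp Require Import Rstruct.
From mathcomp Require Import complex.
From mathcomp Require Import mpoly.

Set Implicit Arguments. Unset Strict Implicit. Unset Printing Implicit Defensive.
Import GRing.Theory Num.Theory.
Local Open Scope ring_scope.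

Definition C : numClosedFieldType := (Rdefinitions.R)[i].

(* A polynomial endomorphism f = (f_1,...,f_n) of A^n_C; the variable x_{i+1}
   is 'X_i for i : 'I_n (0-based indexing). *)
Definition polymap (n : nat) := n.-tuple {mpoly C[n]}.

Definition pm_id (n : nat) : polymap n := [tuple ('X_i : {mpoly C[n]}) | i < n].

(* Composition of maps: (pm_comp f g) = f o g, i.e. its i-th component is
   f_i(g_1,...,g_n). *)
Definition pm_comp (n : nat) (f g : polymap n) : polymap n :=
  [tuple comp_mpoly g (tnth f i) | i < n].

Definition pm_inv (n : nat) (f g : polymap n) : Prop :=
  pm_comp f g = pm_id n /\ pm_comp g f = pm_id n.

Definition is_aut (n : nat) (f : polymap n) : Prop := exists g, pm_inv f g.

(* p only involves the variables x_j with j > i+1 (0-based: indices > i),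
   i.e. p \in C[x_{i+1},...,x_n] in the paper's 1-based notation. *)
Definition only_vars_after (n : nat) (i : 'I_n) (p : {mpoly C[n]}) : Prop :=
  forall m : 'X_{1..n}, m \in msupp p -> forall j : 'I_n, (m j != 0)%N -> (i < j)%N.

Definition Jonq (n : nat) (f : polymap n) : Prop :=
  is_aut f /\
  forall i : 'I_n, exists a : C, a != 0 /\
    exists p : {mpoly C[n]}, only_vars_after i p /\ tnth f i = a *: 'X_i + p.

Inductive gen_subgroup (n : nat) (S : polymap n -> Prop) : polymap n -> Prop :=
| gen_in f : S f -> gen_subgroup S f
| gen_one : gen_subgroup S (pm_id n)
| gen_mul f g : gen_subgroup S f -> gen_subgroup S g -> gen_subgroup S (pm_comp f g)
| gen_inv f g : gen_subgroup S f -> pm_inv f g -> gen_subgroup S g.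

Definition commutators (n : nat) (S : polymap n -> Prop) (h : polymap n) : Prop :=
  exists f g f' g', [/\ S f, S g, pm_inv f f', pm_inv g g' &
    h = pm_comp (pm_comp f' g') (pm_comp f g)].

Fixpoint derived (n : nat) (G : polymap n -> Prop) (k : nat) : polymap n -> Prop :=
  match k with
  | 0 => G
  | k.+1 => gen_subgroup (commutators (derived G k))
  end.

Definition trivial_set (n : nat) (S : polymap n -> Prop) : Prop :=
  forall f, S f <-> f = pm_id n.

Definition solvable_grp (n : nat) (G : polymap n -> Prop) : Prop :=
  exists k, trivial_set (derived G k).

Definition derived_length_is (n : nat) (G : polymap n -> Prop) (k : nat) : Prop :=
  trivial_set (derived G k) /\ forall j, (j < k)%N -> ~ trivial_set (derived G j).

From mathcomp Require Import all_boot all_algebra.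
From mathcomp Require Import Rstruct complex mpoly zify.
Set Implicit Arguments. Unset Strict Implicit. Unset Printing Implicit Defensive.
Import GRing.Theory Num.Theory.
Local Open Scope ring_scope.

(* Write D^k for the derived series of B_n and index coordinates from 0.
   Upper bound: every element of D^k, k >= 1, is unipotent triangular and fixes
   x_i for i > n - k.  For such maps the coordinate i = n - k composes
   additively, (h o l)_i - x_i = (h_i - x_i) + (l_i - x_i), so commutators fix
   it as well; hence D^(n+1) = 1.
   Lower bound: for i < j and P free of x_i and x_j, the commutator of
   x_i |-> x_i + x_j P and x_j |-> x_j + 1 is x_i |-> x_i + P.  By induction on
   k, x_i |-> x_i + x_(i+1) ... x_(i+m) lies in D^k whenever i + m + k = n, so
   the translation x_0 |-> x_0 + 1 lies in D^n. *)

Section VarsIn.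
Variables (R : nzRingType) (n : nat).
Implicit Types (P Q : pred 'I_n) (p q : {mpoly R[n]}).

Definition vars_in P p : bool :=
  all (fun m : 'X_{1..n} => [forall j, (m j != 0)%N ==> P j]) (msupp p).

Lemma vars_inP P p :
  reflect (forall m : 'X_{1..n}, m \in msupp p -> forall j, (m j != 0)%N -> P j) (vars_in P p).
Proof.
apply: (iffP allP) => [Pp m /Pp /forallP Pm j | Pp m /Pp Pm]; first exact/implyP/Pm.
by apply/forallP => j; apply/implyP/Pm.
Qed.

Lemma vars_in_sub P Q p : vars_in P p -> (forall j, P j -> Q j) -> vars_in Q p.
Proof. by move=> /vars_inP Pp PQ; apply/vars_inP => m m_p j /(Pp m m_p); apply: PQ. Qed.

Lemma vars_in0 P : vars_in P 0.
Proof. by rewrite /vars_in msupp0. Qed.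

Lemma vars_inC P c : vars_in P c%:MP.
Proof.
apply/vars_inP => m; rewrite msuppC; case: eqP => // _.
by rewrite inE => /eqP -> j; rewrite mnm0E.
Qed.

Lemma vars_in1 P : vars_in P 1.
Proof. exact: vars_inC. Qed.

Lemma vars_inD P p q : vars_in P p -> vars_in P q -> vars_in P (p + q).
Proof.
move=> /vars_inP Pp /vars_inP Pq; apply/vars_inP => m /msuppD_le.
by rewrite mem_cat => /orP [/Pp | /Pq].
Qed.

Lemma vars_inN P p : vars_in P p -> vars_in P (- p).
Proof. by rewrite /vars_in (eq_all_r (perm_mem (msuppN p))). Qed.

Lemma vars_inZ P c p : vars_in P p -> vars_in P (c *: p).
Proof. by move=> /vars_inP Pp; apply/vars_inP => m /msuppZ_le; apply: Pp. Qed.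

Lemma vars_inM P p q : vars_in P p -> vars_in P q -> vars_in P (p * q).
Proof.
move=> /vars_inP Pp /vars_inP Pq; apply/vars_inP.
move=> m /msuppM_le /allpairsP [[m1 m2] /= [m1_p m2_q ->]] j.
rewrite mnmDE; have [/eqP m1j0 | /(Pp _ m1_p) //] := boolP (m1 j == 0)%N.
by rewrite m1j0; apply: Pq.
Qed.

Lemma vars_inX P j : P j -> vars_in P 'X_j.
Proof.
move=> Pj; apply/vars_inP => m; rewrite msuppX inE => /eqP -> l.
by rewrite mnm1E; case: (j =P l) => // <-.
Qed.

Lemma vars_inXn P p k : vars_in P p -> vars_in P (p ^+ k).
Proof.
move=> Pp; elim: k => [|k IHk]; first by rewrite expr0; apply: vars_in1.
by rewrite exprS; apply: vars_inM.
Qed.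

Lemma vars_in_sum P (T : Type) (r : seq T) (F : T -> {mpoly R[n]}) :
  (forall x, vars_in P (F x)) -> vars_in P (\sum_(x <- r) F x).
Proof. by move=> PF; elim/big_ind: _ => //; [apply: vars_in0 | apply: vars_inD]. Qed.

Lemma vars_in_prod P (T : Type) (r : seq T) (B : pred T) (F : T -> {mpoly R[n]}) :
  (forall x, B x -> vars_in P (F x)) -> vars_in P (\prod_(x <- r | B x) F x).
Proof. by move=> PF; elim/big_ind: _ => //; [apply: vars_in1 | apply: vars_inM]. Qed.

Lemma vars_in_comp P Q p (g : n.-tuple {mpoly R[n]}) :
  vars_in P p -> (forall l, P l -> vars_in Q (tnth g l)) -> vars_in Q (comp_mpoly g p).
Proof.
move=> /vars_inP Pp Qg; rewrite comp_mpolyE; apply: vars_in_sum => m.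
have [m_p | /memN_msupp_eq0 ->] := boolP (m \in msupp p); last by rewrite scale0r; apply: vars_in0.
apply/vars_inZ/vars_in_prod => i _.
have [/eqP -> | /(Pp _ m_p) Pi] := boolP (m i == 0)%N; first by rewrite expr0; apply: vars_in1.
exact/vars_inXn/Qg.
Qed.

Lemma comp_mpoly_vars_in_id P p (g : n.-tuple {mpoly R[n]}) :
  vars_in P p -> (forall l, P l -> tnth g l = 'X_l) -> comp_mpoly g p = p.
Proof.
move=> /vars_inP Pp gX; rewrite -[RHS](comp_mpoly_id p) !comp_mpolyE.
apply: eq_big_seq => m m_p; congr (_ *: _); apply: eq_bigr => i _.
have [/eqP -> | /(Pp _ m_p) Pi] := boolP (m i == 0)%N; first by rewrite !expr0.
by rewrite gX // tnth_mktuple.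
Qed.

End VarsIn.

Arguments vars_in0 {R n P}.

Notation vars_gt i := (vars_in (fun l => (i < l)%N)).
Notation vars_ge i := (vars_in (fun l => (i <= l)%N)).

Lemma ord_rev_ind n (P : 'I_n -> Prop) :
  (forall i : 'I_n, (forall j : 'I_n, (i < j)%N -> P j) -> P i) -> forall i, P i.
Proof.
move=> IH i; have [k] := ubnP (n - i); elim: k i => // k IHk i lt_k.
by apply: IH => j lt_ij; apply: IHk; have := ltn_ord j; lia.
Qed.

Section PolyMaps.
Variable n : nat.
Implicit Types (f g : polymap n) (i : 'I_n).

Lemma tnth_pm_comp f g i : tnth (pm_comp f g) i = comp_mpoly g (tnth f i).
Proof. by rewrite tnth_mktuple. Qed.

Lemma tnth_pm_id i : tnth (pm_id n) i = 'X_i.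
Proof. by rewrite tnth_mktuple. Qed.

Lemma comp_mpolyX_tnth g i : comp_mpoly g 'X_i = tnth g i.
Proof. by rewrite comp_mpolyXU (tnth_nth 0). Qed.

Lemma pm_id_comp g : pm_comp (pm_id n) g = g.
Proof. by apply: eq_from_tnth => i; rewrite tnth_pm_comp tnth_pm_id comp_mpolyX_tnth. Qed.

Lemma comp_mpoly_pm_comp f g p :
  comp_mpoly (pm_comp f g) p = comp_mpoly g (comp_mpoly f p).
Proof.
rewrite (comp_mpolyE p f) raddf_sum comp_mpolyE /=; apply: eq_bigr => m _.
rewrite comp_mpolyZ rmorph_prod; congr (_ *: _); apply: eq_bigr => i _.
by rewrite rmorphXn tnth_pm_comp.
Qed.

End PolyMaps.

Section Triangular.
Variable n : nat.
Implicit Types (f g : polymap n) (i j : 'I_n) (a b : C).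

Definition tri_row f i a := vars_gt i (tnth f i - a *: 'X_i).

Definition triangular f := forall j, vars_ge j (tnth f j).

Definition jonq_form f := forall i, exists2 a, a != 0 & tri_row f i a.

Lemma tri_row_vars_ge f i a : tri_row f i a -> vars_ge i (tnth f i).
Proof.
rewrite /tri_row => fi; rewrite -(subrK (a *: 'X_i) (tnth f i)); apply: vars_inD.
  by apply: (vars_in_sub fi) => l; apply: ltnW.
by apply/vars_inZ/vars_inX.
Qed.

Lemma jonq_form_triangular f : jonq_form f -> triangular f.
Proof. by move=> Jf j; have [a _ /tri_row_vars_ge] := Jf j. Qed.

Lemma tri_row_comp f g i a b :
  triangular g -> tri_row f i a -> tri_row g i b -> tri_row (pm_comp f g) i (a * b).
Proof.
move=> Tg fi gi; rewrite /tri_row tnth_pm_comp -(subrK (a *: 'X_i) (tnth f i)).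
rewrite comp_mpolyD comp_mpolyZ comp_mpolyX_tnth -scalerA -addrA -scalerBr.
apply: vars_inD; last exact: vars_inZ.
by apply: vars_in_comp fi _ => l lt_il; apply: (vars_in_sub (Tg l)) => j; apply: leq_trans.
Qed.

Lemma tri_row_inv f g : jonq_form f -> pm_comp f g = pm_id n ->
  forall i a, a != 0 -> tri_row f i a -> tri_row g i a^-1.
Proof.
move=> Jf fg; apply: ord_rev_ind => i IH a a0 fi.
have g_gt j : (i < j)%N -> vars_gt i (tnth g j).
  move=> lt_ij; have [b b0 /(IH j lt_ij b b0) /tri_row_vars_ge gj] := Jf j.
  by apply: (vars_in_sub gj) => l; apply: leq_trans.
have : comp_mpoly g (tnth f i) = 'X_i by rewrite -tnth_pm_comp fg tnth_pm_id.
rewrite -(subrK (a *: 'X_i) (tnth f i)) comp_mpolyD comp_mpolyZ comp_mpolyX_tnth.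
set P := comp_mpoly g _ => gfi.
rewrite /tri_row; have -> : tnth g i - a^-1 *: 'X_i = - (a^-1 *: P).
  by rewrite -gfi scalerDr scalerA mulVf // scale1r opprD addrCA subrr addr0.
by apply/vars_inN/vars_inZ/(vars_in_comp fi) => l; apply: g_gt.
Qed.

Lemma jonq_form_comp f g : jonq_form f -> jonq_form g -> jonq_form (pm_comp f g).
Proof.
move=> Jf Jg i; have [a a0 fi] := Jf i; have [b b0 gi] := Jg i.
exists (a * b); first exact: mulf_neq0.
exact: tri_row_comp (jonq_form_triangular Jg) fi gi.
Qed.

Lemma jonq_form_inv f g : jonq_form f -> pm_comp f g = pm_id n -> jonq_form g.
Proof.
move=> Jf fg i; have [a a0 fi] := Jf i.
by exists a^-1; [rewrite invr_eq0 | apply: tri_row_inv fi].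
Qed.

Lemma Jonq_jonq_form f : Jonq f -> jonq_form f.
Proof.
case=> _ Jf i; have [a [a0 [p [p_gt fi]]]] := Jf i.
by exists a => //; rewrite /tri_row fi addrAC subrr add0r; apply/vars_inP.
Qed.

End Triangular.

Section UnipotentLevel.
Variable n : nat.
Implicit Types (f g h l : polymap n) (i j : 'I_n).

Definition unipotent_level k f :=
  (forall i, tri_row f i 1) /\ forall i, (n < i + k)%N -> tnth f i = 'X_i.

Lemma level_jonq_form k f : unipotent_level k f -> jonq_form f.
Proof. by case=> f1 _ i; exists 1; [apply: oner_neq0 | apply: f1]. Qed.

Lemma level_id k : unipotent_level k (pm_id n).
Proof.
split=> [i | i _]; last by rewrite tnth_pm_id.
by rewrite /tri_row tnth_pm_id scale1r subrr; apply: vars_in0.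
Qed.

Lemma level_comp k f g :
  unipotent_level k f -> unipotent_level k g -> unipotent_level k (pm_comp f g).
Proof.
move=> Lf Lg; split=> [i | i lt_n_ik].
  rewrite -[1 : C]mulr1; apply: tri_row_comp (Lf.1 i) (Lg.1 i).
  exact/jonq_form_triangular/level_jonq_form/Lg.
by rewrite tnth_pm_comp Lf.2 // comp_mpolyX_tnth Lg.2.
Qed.

Lemma level_inv k f g :
  unipotent_level k f -> pm_comp f g = pm_id n -> unipotent_level k g.
Proof.
move=> Lf fg; split=> [i | i lt_n_ik].
  by rewrite -invr1; apply: tri_row_inv (level_jonq_form Lf) fg _ _ (oner_neq0 C) (Lf.1 i).
by rewrite -comp_mpolyX_tnth -{1}(Lf.2 i lt_n_ik) -tnth_pm_comp fg tnth_pm_id.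
Qed.

Lemma gen_subgroup_level k S :
  (forall h, S h -> unipotent_level k h) -> forall f, gen_subgroup S f -> unipotent_level k f.
Proof.
move=> LS f; elim=> {f} [f /LS // | | f g _ Lf _ Lg | f g _ Lf [fg _]].
- exact: level_id.
- exact: level_comp.
- exact: level_inv Lf fg.
Qed.

Definition transl_part f i := tnth f i - 'X_i.

(* h_i - x_i only involves variables that l fixes. *)
Lemma transl_part_comp h l i : tri_row h i 1 -> (forall j, (i < j)%N -> tnth l j = 'X_j) ->
  transl_part (pm_comp h l) i = transl_part h i + transl_part l i.
Proof.
rewrite /tri_row scale1r /transl_part => hi l_fix.
rewrite tnth_pm_comp -{1}(subrK 'X_i (tnth h i)) comp_mpolyD comp_mpolyX_tnth.
by rewrite (comp_mpoly_vars_in_id hi l_fix) addrA.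
Qed.

Lemma commutator_level k f g f' g' :
  unipotent_level k f -> unipotent_level k g -> pm_inv f f' -> pm_inv g g' ->
  unipotent_level k.+1 (pm_comp (pm_comp f' g') (pm_comp f g)).
Proof.
move=> Lf Lg [ff' _] [gg' _].
have Lf' := level_inv Lf ff'; have Lg' := level_inv Lg gg'.
have Lc := level_comp (level_comp Lf' Lg') (level_comp Lf Lg).
split=> [|i lt_n_ik]; first exact: Lc.1.
have [/Lc.2 // | le_ik] := ltnP n (i + k).
have t_comp h l : unipotent_level k h -> unipotent_level k l ->
    transl_part (pm_comp h l) i = transl_part h i + transl_part l i.
  move=> Lh [_ l_fix]; apply: transl_part_comp (Lh.1 i) _ => j lt_ij.
  by apply: l_fix; rewrite addnS in lt_n_ik; lia.
have t_inv h h' : unipotent_level k h -> pm_comp h h' = pm_id n ->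
    transl_part h' i = - transl_part h i.
  move=> Lh hh'; apply: (addrI (transl_part h i)).
  rewrite -t_comp ?hh' //; last exact: level_inv Lh hh'.
  by rewrite /transl_part tnth_pm_id !subrr.
apply: subr0_eq; rewrite -/(transl_part _ i).
rewrite (t_comp _ _ (level_comp Lf' Lg') (level_comp Lf Lg)).
rewrite [X in X + _](t_comp _ _ Lf' Lg') [X in _ + X](t_comp _ _ Lf Lg).
rewrite (t_inv _ _ Lf ff') (t_inv _ _ Lg gg').
by rewrite -opprD addNr.
Qed.

Lemma commutator_unipotent f g f' g' :
  Jonq f -> Jonq g -> pm_inv f f' -> pm_inv g g' ->
  unipotent_level 1 (pm_comp (pm_comp f' g') (pm_comp f g)).
Proof.
move=> /Jonq_jonq_form Jf /Jonq_jonq_form Jg [ff' _] [gg' _].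
split=> [i | i]; last by rewrite addn1 ltnNge ltn_ord.
have [a a0 fi] := Jf i; have [b b0 gi] := Jg i.
have Jf' := jonq_form_inv Jf ff'; have Jg' := jonq_form_inv Jg gg'.
have -> : (1 : C) = (a^-1 * b^-1) * (a * b) by rewrite mulrACA !mulVf ?mulr1.
apply: tri_row_comp.
- exact/jonq_form_triangular/jonq_form_comp.
- exact: tri_row_comp (jonq_form_triangular Jg')
    (tri_row_inv Jf ff' a0 fi) (tri_row_inv Jg gg' b0 gi).
- exact: tri_row_comp (jonq_form_triangular Jg) fi gi.
Qed.

Lemma derived_level k f : derived (@Jonq n) k.+1 f -> unipotent_level k.+1 f.
Proof.
elim: k f => [|k IHk]; apply: gen_subgroup_level => _ [f [g [f' [g' [Jf Jg ff' gg' ->]]]]].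
  exact: commutator_unipotent.
exact: commutator_level (IHk _ Jf) (IHk _ Jg) ff' gg'.
Qed.

Lemma level_top f : unipotent_level n.+1 f -> f = pm_id n.
Proof.
by case=> _ f_fix; apply: eq_from_tnth => i; rewrite tnth_pm_id f_fix // addnS ltnS leq_addl.
Qed.

End UnipotentLevel.

Section Elementary.
Variable n : nat.
Implicit Types (i j l : 'I_n) (a b : C) (p q r : {mpoly C[n]}).

Definition elem i a q : polymap n :=
  [tuple if j == i then a *: 'X_i + q else 'X_j | j < n].

Lemma tnth_elem i a q j : tnth (elem i a q) j = if j == i then a *: 'X_i + q else 'X_j.
Proof. by rewrite tnth_mktuple. Qed.

Lemma comp_mpoly_elemX i a q j :
  comp_mpoly (elem i a q) 'X_j = if j == i then a *: 'X_i + q else 'X_j.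
Proof. by rewrite comp_mpolyX_tnth tnth_elem. Qed.

Lemma comp_mpoly_elem_id i a q (P : pred 'I_n) p :
  vars_in P p -> (forall l, P l -> l != i) -> comp_mpoly (elem i a q) p = p.
Proof.
by move=> Pp Pi; apply: comp_mpoly_vars_in_id Pp _ => l /Pi /negbTE li; rewrite tnth_elem li.
Qed.

Lemma elem_comp i a b q r :
  vars_gt i q -> pm_comp (elem i a q) (elem i b r) = elem i (a * b) (a *: r + q).
Proof.
move=> q_gt; apply: eq_from_tnth => j; rewrite tnth_pm_comp !tnth_elem.
have [_ | ji] := eqVneq j i; last by rewrite comp_mpoly_elemX (negbTE ji).
rewrite comp_mpolyD comp_mpolyZ comp_mpoly_elemX eqxx (comp_mpoly_elem_id _ _ q_gt).
  by rewrite scalerDr scalerA addrA.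
by move=> l; rewrite neq_ltn => ->; rewrite orbT.
Qed.

Lemma elem1 i : elem i 1 0 = pm_id n.
Proof.
apply: eq_from_tnth => j; rewrite tnth_elem tnth_pm_id.
by have [-> | _] := eqVneq j i; rewrite ?scale1r ?addr0.
Qed.

Lemma elem_inv i a q : a != 0 -> vars_gt i q ->
  pm_inv (elem i a q) (elem i a^-1 (- (a^-1 *: q))).
Proof.
move=> a0 q_gt; split; first by rewrite elem_comp // mulfV // scalerN scalerKV // addNr elem1.
by rewrite elem_comp ?mulVf ?addrN ?elem1 //; apply/vars_inN/vars_inZ.
Qed.

Lemma elem_inv1 i q : vars_gt i q -> pm_inv (elem i 1 q) (elem i 1 (- q)).
Proof. by move=> q_gt; have := elem_inv (oner_neq0 C) q_gt; rewrite invr1 scale1r. Qed.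

Lemma elem_Jonq i a q : a != 0 -> vars_gt i q -> Jonq (elem i a q).
Proof.
move=> a0 q_gt; split; first by eexists; apply: elem_inv.
move=> j; rewrite tnth_elem; have [-> | _] := eqVneq j i.
  by exists a; split => //; exists q; split => //; apply/vars_inP.
exists 1; split; first exact: oner_neq0.
by exists 0; split; [apply/vars_inP/vars_in0 | rewrite scale1r addr0].
Qed.

(* The commutator of x_i |-> 2 x_i and x_i |-> x_i + 2 q is x_i |-> x_i + q. *)
Lemma elem_derived1 i q : vars_gt i q -> derived (@Jonq n) 1 (elem i 1 q).
Proof.
move=> q_gt; have two0 : (2 : C) != 0 by rewrite pnatr_eq0.
have q2_gt : vars_gt i (2 *: q) by apply: vars_inZ.
apply: gen_in; exists (elem i 2 0), (elem i 1 (2 *: q)), (elem i 2^-1 0), (elem i 1 (- (2 *: q))).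
split.
- exact/elem_Jonq/vars_in0.
- exact/elem_Jonq/q2_gt/oner_neq0.
- by have := elem_inv two0 vars_in0; rewrite scaler0 oppr0.
- exact: elem_inv1.
rewrite !elem_comp; try exact: vars_in0; last by apply: vars_inD vars_in0; apply/vars_inZ/vars_inN.
rewrite !mulr1 mulVf // !addr0 scalerN !scalerA mulVf // mul1r scale1r.
by rewrite scaler_nat mulr2n addrK.
Qed.

Lemma elem_commutator i j P : (i < j)%N -> vars_in (fun l => (i < l)%N && (l != j)) P ->
  pm_comp (pm_comp (elem i 1 (- ('X_j * P))) (elem j 1 (- 1)))
          (pm_comp (elem i 1 ('X_j * P)) (elem j 1 1)) = elem i 1 P.
Proof.
move=> lt_ij P_ij.
have Pi a q : comp_mpoly (elem i a q) P = P.
  by apply: (comp_mpoly_elem_id a q P_ij) => l /andP [lt_il _]; rewrite neq_ltn lt_il orbT.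
have Pj a q : comp_mpoly (elem j a q) P = P by apply: (comp_mpoly_elem_id a q P_ij) => l /andP [].
have /negbTE ij : i != j by rewrite neq_ltn lt_ij.
have ji : (j == i) = false by rewrite eq_sym.
apply: eq_from_tnth => l; rewrite tnth_pm_comp comp_mpoly_pm_comp tnth_pm_comp !tnth_elem.
have [_ | /negbTE li] := eqVneq l i.
  do 4 rewrite ?(comp_mpolyD, comp_mpolyN, comp_mpolyZ, rmorphM, comp_mpoly_elemX,
                comp_mpoly1, Pi, Pj, eqxx, ij, ji) /=.
  by rewrite !scale1r addrK mulrDl mul1r [_ * P + P]addrC addrA addrK.
have [-> | /negbTE lj] := eqVneq l j; last by rewrite !(comp_mpoly_elemX, lj, li).
do 4 rewrite ?(comp_mpolyD, comp_mpolyN, comp_mpolyZ, comp_mpoly_elemX, comp_mpoly1, eqxx, ij, ji) /=.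
by rewrite !scale1r addrK.
Qed.

Definition prodX_range i m : {mpoly C[n]} := \prod_(l < n | (i < l <= i + m)%N) 'X_l.

Lemma vars_in_prodX_range i m : vars_in (fun l => (i < l <= i + m)%N) (prodX_range i m).
Proof. by apply: vars_in_prod => l; apply: vars_inX. Qed.

Lemma prodX_range0 i : prodX_range i 0 = 1.
Proof. by apply: big_pred0 => l; rewrite addn0; case: ltnP. Qed.

Lemma prodX_rangeS i m (lt_imn : (i + m.+1 < n)%N) :
  prodX_range i m.+1 = 'X_(Ordinal lt_imn) * prodX_range i m.
Proof.
rewrite /prodX_range (bigD1 (Ordinal lt_imn)) /=; last by rewrite addnS ltnS leq_addr leqnn.
congr (_ * _); apply: eq_bigl => l; rewrite -val_eqE /=.
by case: (ltnP i l) => //= _; rewrite addnS leq_eqVlt ltnS; case: eqP => [->|]; rewrite ?ltnn ?andbT.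
Qed.

Lemma derived_elem_prodX k : (0 < k)%N -> forall i m, (i + m + k = n)%N ->
  derived (@Jonq n) k (elem i 1 (prodX_range i m)).
Proof.
elim: k => // -[_ _ i m _ | k IHk _ i m e].
  by apply: elem_derived1; apply: (vars_in_sub (vars_in_prodX_range i m)) => l /andP [].
have lt_imn : (i + m.+1 < n)%N by lia.
pose j := Ordinal lt_imn; have lt_ij : (i < j)%N by rewrite /= addnS ltnS leq_addr.
have P_ij : vars_in (fun l => (i < l)%N && (l != j)) (prodX_range i m).
  apply: (vars_in_sub (vars_in_prodX_range i m)) => l /andP [-> le_l].
  by rewrite -val_eqE /= neq_ltn addnS ltnS le_l.
have XP_gt : vars_gt i ('X_j * prodX_range i m).
  by apply: vars_inM; [apply: vars_inX | apply: (vars_in_sub P_ij) => l /andP []].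
have D_XP : derived (@Jonq n) k.+1 (elem i 1 ('X_j * prodX_range i m)).
  by rewrite -(prodX_rangeS lt_imn); apply: IHk; lia.
have D_j : derived (@Jonq n) k.+1 (elem j 1 1).
  by rewrite -(prodX_range0 j); apply: IHk => //=; lia.
apply: gen_in; exists (elem i 1 ('X_j * prodX_range i m)), (elem j 1 1),
  (elem i 1 (- ('X_j * prodX_range i m))), (elem j 1 (- 1)).
by split => //; [apply: elem_inv1 | apply/elem_inv1/vars_in1 | rewrite elem_commutator].
Qed.

Lemma elem_translation_neq_id i : elem i 1 1 != pm_id n.
Proof.
apply/eqP => /(congr1 (fun f => (tnth f i)@_0%MM)).
rewrite /= tnth_elem tnth_pm_id eqxx mcoeffD mcoeffZ !mcoeffX mcoeff1 mnm1_eq0 eqxx.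
by rewrite mulr0 add0r => /eqP; rewrite oner_eq0.
Qed.

End Elementary.

Lemma derived_trivial_succ n (G : polymap n -> Prop) k :
  trivial_set (derived G k) -> trivial_set (derived G k.+1).
Proof.
move=> Gk f; split=> [|->]; last exact: gen_one.
elim=> {f} [_ [f [g [f' [g' [/Gk Gf /Gk Gg [ff' _] [gg' _] ->]]]]] | // | f g _ -> _ -> | f g _ -> [fg _]].
- by rewrite Gf Gg pm_id_comp in ff' gg' *; rewrite ff' gg' !pm_id_comp.
- exact: pm_id_comp.
- by rewrite pm_id_comp in fg.
Qed.

Lemma derived_trivial_mono n (G : polymap n -> Prop) j k : (j <= k)%N ->
  trivial_set (derived G j) -> trivial_set (derived G k).
Proof.
move=> /subnK <-; elim: (k - j)%N => [// | d IHd Gj].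
by rewrite addSn; apply/derived_trivial_succ/IHd.
Qed.

Theorem lemma3p2 (n : nat) (hn : (1 <= n)%N) :
  solvable_grp (@Jonq n) /\ derived_length_is (@Jonq n) n.+1.
Proof.
have D_top : trivial_set (derived (@Jonq n) n.+1).
  by move=> f; split=> [/derived_level/level_top // | ->]; apply: gen_one.
split; first by exists n.+1.
split=> // j lt_jn D_j.
have D_n := derived_trivial_mono (ltnSE lt_jn) D_j.
have := derived_elem_prodX (i := Ordinal hn) (m := 0) hn erefl; rewrite prodX_range0.
by move/(D_n _).1/eqP; apply/negP/elem_translation_neq_id.
Qed.
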